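(* Let $p_1,p_2,p_3$ be distinct primes and $n_1,n_2,n_3$ be positive integers. Then $$\sum_{i=1}^3\frac{p_i^{n_i+1}-p_i}{p_i-1}\leq\frac{1}{2}\prod_{i=1}^3p_i^{n_i}.$$ *)

From mathcomp Require Import all_boot all_algebra.

(* Write a_i = p_i^n_i, so that the i-th summand is p_i (a_i - 1) / (p_i - 1).
   Since p / (p - 1) decreases in p, after sorting the primes (p_1 >= 2,
   p_2 >= 3, p_3 >= 5) the sum is at most 2 a_1 + 3/2 a_2 + 5/4 a_3, and this
   is at most a_1 a_2 a_3 / 2 because a_1 >= 2, a_2 >= 3, a_3 >= 5. *)
From mathcomp Require Import all_boot all_order all_algebra.
From mathcomp Require Import lra zify.
Set Implicit Arguments.
Unset Strict Implicit.
Unset Printing Implicit Defensive.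

Import Order.TTheory GRing.Theory Num.Theory.
Local Open Scope ring_scope.

Definition pow_sum (R : fieldType) (x : R) (n : nat) : R :=
  (x ^+ n.+1 - x) / (x - 1).

Lemma pow_sum_le (R : realFieldType) (k x : R) (n : nat) :
  1 < k -> k <= x -> (k - 1) * pow_sum x n <= k * x ^+ n.
Proof.
move=> k_gt1 le_kx; set a := x ^+ n.
have a_ge0 : 0 <= a by rewrite exprn_ge0 //; lra.
rewrite /pow_sum exprS -/a mulrA ler_pdivrMr; last by lra.
have : 0 <= a * (x - k) by rewrite mulr_ge0 // subr_ge0.
nra.
Qed.

Lemma weighted_sum_le_prod (R : realDomainType) (a1 a2 a3 : R) :
  2 <= a1 -> 3 <= a2 -> 5 <= a3 -> 8 * a1 + 6 * a2 + 5 * a3 <= 2 * (a1 * a2 * a3).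
Proof.
move=> ge1 ge2 ge3.
have x1 : 0 <= a1 - 2 by rewrite subr_ge0.
have x2 : 0 <= a2 - 3 by rewrite subr_ge0.
have x3 : 0 <= a3 - 5 by rewrite subr_ge0.
have := mulr_ge0 (mulr_ge0 x1 x2) x3.
have := mulr_ge0 x1 x2; have := mulr_ge0 x1 x3; have := mulr_ge0 x2 x3.
lra.
Qed.

Lemma sorted_primes_ge (p1 p2 p3 : nat) :
  prime p1 -> prime p3 -> (p1 < p2 < p3)%N -> [/\ 2 <= p1, 3 <= p2 & 5 <= p3]%N.
Proof.
move=> /prime_gt1 p1_gt1 p3_prime /andP[lt12 lt23].
have p3_neq4 : p3 != 4%N by apply: contraTneq p3_prime => ->.
split; lia.
Qed.

Lemma pow_sum3_le_half_prod_sorted (R : realFieldType) (p1 p2 p3 n1 n2 n3 : nat) :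
  prime p1 -> prime p3 -> (p1 < p2 < p3)%N ->
  (0 < n1)%N -> (0 < n2)%N -> (0 < n3)%N ->
  pow_sum (p1%:R : R) n1 + pow_sum p2%:R n2 + pow_sum p3%:R n3
  <= 2^-1 * (p1%:R ^+ n1 * p2%:R ^+ n2 * p3%:R ^+ n3).
Proof.
move=> P1 P3 lt123 n1_gt0 n2_gt0 n3_gt0.
have [ge1 ge2 ge3] := sorted_primes_ge P1 P3 lt123.
have {}ge1 : 2 <= p1%:R :> R by rewrite (ler_nat _ 2).
have {}ge2 : 3 <= p2%:R :> R by rewrite (ler_nat _ 3).
have {}ge3 : 5 <= p3%:R :> R by rewrite (ler_nat _ 5).
have pow_ge (c : R) p n : (0 < n)%N -> 1 <= c -> c <= p%:R -> c <= p%:R ^+ n.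
  by move=> n_gt0 c_ge1 le_cp; rewrite (le_trans le_cp) // ler_eXnr // (le_trans c_ge1).
have : (2 - 1) * pow_sum p1%:R n1 <= 2 * p1%:R ^+ n1 :> R by apply: pow_sum_le; lra.
have : (3 - 1) * pow_sum p2%:R n2 <= 3 * p2%:R ^+ n2 :> R by apply: pow_sum_le; lra.
have : (5 - 1) * pow_sum p3%:R n3 <= 5 * p3%:R ^+ n3 :> R by apply: pow_sum_le; lra.
have : 8 * p1%:R ^+ n1 + 6 * p2%:R ^+ n2 + 5 * p3%:R ^+ n3
       <= 2 * (p1%:R ^+ n1 * p2%:R ^+ n2 * p3%:R ^+ n3) :> R.
  by apply: weighted_sum_le_prod; apply: pow_ge => //; lra.
lra.
Qed.

Theorem lemma2p3 (p1 p2 p3 n1 n2 n3 : nat) :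
  prime p1 -> prime p2 -> prime p3 ->
  p1 != p2 -> p1 != p3 -> p2 != p3 ->
  (0 < n1)%N -> (0 < n2)%N -> (0 < n3)%N ->
  ((p1%:R ^+ n1.+1 - p1%:R) / (p1%:R - 1)
   + (p2%:R ^+ n2.+1 - p2%:R) / (p2%:R - 1)
   + (p3%:R ^+ n3.+1 - p3%:R) / (p3%:R - 1) : rat)
  <= 2^-1 * (p1%:R ^+ n1 * p2%:R ^+ n2 * p3%:R ^+ n3).
Proof.
move=> P1 P2 P3 ne12 ne13 ne23 n1_gt0 n2_gt0 n3_gt0.
rewrite -/(pow_sum (p1%:R : rat) n1) -/(pow_sum (p2%:R : rat) n2)
        -/(pow_sum (p3%:R : rat) n3).
wlog lt23 : p2 p3 n2 n3 P2 P3 n2_gt0 n3_gt0 ne12 ne13 ne23 / (p2 < p3)%N.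
  move=> sorted23; case: (ltngtP p2 p3) => [lt23|lt32|eq23].
  - exact: sorted23.
  - have := sorted23 p3 p2 n3 n2 P3 P2 n3_gt0 n2_gt0 ne13 ne12.
    by rewrite eq_sym => /(_ ne23 lt32); lra.
  - by rewrite eq23 eqxx in ne23.
wlog lt12 : p1 p2 p3 n1 n2 n3 P1 P2 P3 n1_gt0 n2_gt0 n3_gt0 ne12 ne13 ne23 lt23 / (p1 < p2)%N.
  move=> sorted12; case: (ltngtP p1 p2) => [lt12|lt21|eq12].
  - exact: sorted12.
  - case: (ltngtP p1 p3) => [lt13|lt31|eq13].
    + have := sorted12 p2 p1 p3 n2 n1 n3 P2 P1 P3 n2_gt0 n1_gt0 n3_gt0.
      by rewrite eq_sym => /(_ ne12 ne23 ne13 lt13 lt21); lra.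
    + have := sorted12 p2 p3 p1 n2 n3 n1 P2 P3 P1 n2_gt0 n3_gt0 n1_gt0.
      by rewrite ![_ == p1]eq_sym => /(_ ne23 ne12 ne13 lt31 lt23); lra.
    + by rewrite eq13 eqxx in ne13.
  - by rewrite eq12 eqxx in ne12.
by apply: pow_sum3_le_half_prod_sorted; rewrite ?lt12.
Qed.
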